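(* Let $(X,G)$ be a $G$-system with metric $d$ and $(F_n)$ a Følner sequence in $G$. For $\alpha,\varepsilon\in(0,1)$ define $d_{\alpha,\varepsilon}(x,y)=d(x,y)$ if $d(x,y)\ge\varepsilon$ and $d_{\alpha,\varepsilon}(x,y)=\varepsilon^{1-\alpha}d(x,y)^\alpha$ if $d(x,y)<\varepsilon$. Then $$\overline{\mathrm{mdim}}_{\mathrm H}(X,\{F_n\},d_{\alpha,\varepsilon})=\frac{\overline{\mathrm{mdim}}_{\mathrm H}(X,\{F_n\},d)}{\alpha}.$$
   Context: $G$ is a countable discrete amenable group; a $G$-system is a compact metric space with a continuous $G$-action. For finite nonempty $F\subset G$, $\rho_F(x,y)=\max_{g\in F}\rho(gx,gy)$. $\mathrm H^s_\varepsilon(X,\rho)=\inf\{\sum_{i\ge1}(\mathrm{diam}_\rho E_i)^s: X=\bigcup_iE_i,\ \mathrm{diam}_\rho E_i<\varepsilon\}$ (with $0^0=1$), $\dim_{\mathrm H}(X,\rho,\varepsilon)=\sup\{s\ge0:\mathrm H^s_\varepsilon(X,\rho)\ge1\}$, and $\overline{\mathrm{mdim}}_{\mathrm H}(X,\{F_n\},\rho)=\lim_{\varepsilon\to0}\limsup_{n}\frac{\dim_{\mathrm H}(X,\rho_{F_n},\varepsilon)}{|F_n|}$. *)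

From HB Require Import structures.
From mathcomp Require Import all_boot all_order all_algebra.
From mathcomp Require Import all_classical all_reals all_analysis.
Set Implicit Arguments. Unset Strict Implicit. Unset Printing Implicit Defensive.
Import Order.TTheory GRing.Theory Num.Theory numFieldNormedType.Exports.
Local Open Scope classical_set_scope.
Local Open Scope ring_scope.

Record group_laws (G : Type) (mul : G -> G -> G) (one : G) (inv : G -> G)
  : Prop := GroupLaws {
  mulA : forall a b c, mul a (mul b c) = mul (mul a b) c;
  mul1g : forall a, mul one a = a;
  mulg1 : forall a, mul a one = a;
  mulVg : forall a, mul (inv a) a = one;
  mulgV : forall a, mul a (inv a) = one }.

Definition is_metric {R : realType} {X : Type} (d : X -> X -> R) : Prop :=
  [/\ forall x y, 0 <= d x y,
      forall x y, d x y = 0 <-> x = y,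
      forall x y, d x y = d y x &
      forall x y z, d x z <= d x y + d y z].

(* sequential compactness (equivalent to compactness for metric spaces) *)
Definition seq_compact {R : realType} {X : Type} (d : X -> X -> R) : Prop :=
  forall u : nat -> X, exists (phi : nat -> nat) (x : X),
    (forall n, (phi n < phi n.+1)%N) /\
    ((fun n => d (u (phi n)) x) @ \oo --> (0 : R)).

Definition compact_metric {R : realType} {X : Type} (d : X -> X -> R) : Prop :=
  is_metric d /\ seq_compact d.

Definition metric_continuous {R : realType} {X : Type} (d : X -> X -> R)
  (f : X -> X) : Prop :=
  forall x (e : R), 0 < e -> exists2 del : R, 0 < del &
    forall y, d x y < del -> d (f x) (f y) < e.

Definition G_system {R : realType} {G X : Type} (mul : G -> G -> G) (one : G)
  (d : X -> X -> R) (act : G -> X -> X) : Prop :=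
  [/\ compact_metric d,
      forall g, metric_continuous d (act g),
      forall x, act one x = x &
      forall g h x, act (mul g h) x = act g (act h x)].

(* a finite set F ⊂ G is represented by a duplicate-free list; |F| = size F *)
(* |gF Δ F| = |gF \ F| + |F \ gF| *)
Definition symdiff_card {G : eqType} (mul : G -> G -> G) (g : G) (F : seq G)
  : nat :=
  (size [seq x <- F | mul g x \notin F] +
   size [seq y <- F | y \notin [seq mul g x | x <- F]])%N.

Definition Folner {R : realType} {G : eqType} (mul : G -> G -> G)
  (F : nat -> seq G) : Prop :=
  (forall n, uniq (F n) /\ F n != [::]) /\
  forall g : G,
    (fun n => (symdiff_card mul g (F n))%:R / (size (F n))%:R : R)
      @ \oo --> (0 : R).

Definition rhoF {R : realType} {G X : Type} (act : G -> X -> X)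
  (rho : X -> X -> R) (F : seq G) : X -> X -> R :=
  fun x y => \big[Order.max/0]_(g <- F) rho (act g x) (act g y).

Local Open Scope ereal_scope.

(* diameter, with diam of the empty set = 0 *)
Definition diam {R : realType} {X : Type} (rho : X -> X -> R) (E : set X)
  : \bar R :=
  ereal_sup ([set (rho x y)%:E | x in E & y in E] `|` [set 0]).

(* H^s_eps(X, rho): infimum over countable covers {E_i}_{i in J}, J ⊆ nat,
   with diam E_i < eps, of sum (diam E_i)^s  (powR 0 0 = 1, i.e. 0^0 = 1) *)
Definition Hmeas {R : realType} {X : Type} (rho : X -> X -> R) (s eps : R)
  : \bar R :=
  ereal_inf [set v | exists (J : set nat) (E : nat -> set X),
     [/\ [set: X] = \bigcup_(i in J) E i,
         (forall i, J i -> diam rho (E i) < eps%:E) &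
         v = \esum_(i in J) ((fine (diam rho (E i))) `^ s)%:E]].

Definition dimH {R : realType} {X : Type} (rho : X -> X -> R) (eps : R)
  : \bar R :=
  ereal_sup [set s%:E | s in [set s : R | (0 <= s)%R /\ 1 <= Hmeas rho s eps]].

Definition mdimH {R : realType} {G X : Type} (act : G -> X -> X)
  (F : nat -> seq G) (rho : X -> X -> R) : \bar R :=
  lim ((fun eps : R =>
          limn_esup (fun n => dimH (rhoF act rho (F n)) eps
                               * ((size (F n))%:R^-1)%:E)) x
       @[x --> 0^'+]).

Definition d_ae {R : realType} {X : Type} (d : X -> X -> R) (alpha eps : R)
  : X -> X -> R :=
  fun x y => if (eps <= d x y)%R then d x y
             else (eps `^ (1 - alpha) * (d x y) `^ alpha)%R.

From mathcomp Require Import all_boot all_order all_algebra.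
From mathcomp Require Import all_classical all_reals all_analysis.
From mathcomp Require Import ring.
Import Order.TTheory GRing.Theory Num.Theory numFieldNormedType.Exports.
Local Open Scope classical_set_scope.
Local Open Scope ring_scope.

(* Write [c = eps^(1-alpha)] and [phi] for the profile with [d_ae = phi o d].
   Since [phi] is nondecreasing, the Bowen metrics of [d_ae] are [phi] applied
   to those of [d].  Below a scale [delta <= eps], [phi t = c t^alpha]: a set
   of [d_F]-diameter [D < delta] has [d_ae]-diameter at most [c D^alpha < eta],
   where [eta = c delta^alpha], and conversely.  As [c <= 1] this gives
   [dim_H(d_ae_F, eta) <= dim_H(d_F, delta) / alpha] and, raising diameters to
   the power [r = ln delta / ln eta], [dim_H(d_F, delta) <= dim_H(d_ae_F, eta) / r],
   uniformly in [F].  When [delta -> 0] also [eta -> 0] and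
   [1/r = alpha + ln c / ln delta -> alpha], so the suprema over scales defining
   the two mean dimensions differ by the factor [1/alpha]. *)

Section powR_facts.
Context {R : realType}.
Implicit Types a v w : R.

Lemma ler_powR2r {a v w} : 0 <= a -> 0 <= v -> v <= w -> v `^ a <= w `^ a.
Proof.
by move=> a0 v0 vw; apply: ge0_ler_powR; rewrite ?nnegrE // (le_trans v0 vw).
Qed.

Lemma ltr_powR2r {a v w} : 0 < a -> 0 <= v -> v < w -> v `^ a < w `^ a.
Proof.
by move=> a0 v0 vw; apply: gt0_ltr_powR; rewrite ?nnegrE // (le_trans v0 (ltW vw)).
Qed.

Lemma powRK {a v} : a != 0 -> 0 <= v -> (v `^ a) `^ a^-1 = v.
Proof. by move=> a0 v0; rewrite -powRrM mulfV // powRr1. Qed.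

Lemma powRVK {a v} : a != 0 -> 0 <= v -> (v `^ a^-1) `^ a = v.
Proof. by move=> a0 v0; rewrite -powRrM mulVf // powRr1. Qed.

Lemma powR_le1 {a v} : 0 < v <= 1 -> 0 <= a -> v `^ a <= 1.
Proof. by move=> v01 a0; rewrite -(powRr0 v); apply: ger_powR. Qed.

Lemma mulr_powR_subrK a {v} : 0 < v -> v `^ (1 - a) * v `^ a = v.
Proof.
move=> v0; rewrite -powRD; last by apply/implyP => _; rewrite gt_eqF.
by rewrite subrK powRr1 // ltW.
Qed.

End powR_facts.

Definition dae_profile {R : realType} (alpha eps t : R) : R :=
  if eps <= t then t else eps `^ (1 - alpha) * t `^ alpha.

Section dae_profile.
Variables (R : realType) (alpha eps : R).
Hypotheses (alpha_gt0 : 0 < alpha) (eps_gt0 : 0 < eps).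
Local Notation phi := (dae_profile alpha eps).

Lemma dae_profile0 : phi 0 = 0.
Proof. by rewrite /dae_profile leNgt eps_gt0 /= powR0 ?mulr0 // gt_eqF. Qed.

Lemma le_dae_profile t u : 0 <= t -> t <= u -> phi t <= phi u.
Proof.
move=> t0 tu; have u0 := le_trans t0 tu.
rewrite /dae_profile; case: (leP eps t) => et; first by rewrite (le_trans et tu).
have ler_c := ler_wpM2l (powR_ge0 eps (1 - alpha)).
case: (leP eps u) => eu; last by rewrite ler_c // ler_powR2r // ltW.
apply: le_trans eu; rewrite -[leRHS](mulr_powR_subrK alpha eps_gt0).
by rewrite ler_c // ler_powR2r // ltW.
Qed.

Lemma bigmax_dae_profile (I : Type) (s : seq I) (f : I -> R) :
  (forall i, 0 <= f i) ->
  \big[Order.max/0]_(i <- s) phi (f i) = phi (\big[Order.max/0]_(i <- s) f i).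
Proof.
move=> f0; elim: s => [|i s IH]; first by rewrite !big_nil dae_profile0.
rewrite !big_cons IH.
have m0 : 0 <= \big[Order.max/0]_(j <- s) f j by apply: bigmax_ge_id.
case: (leP (f i) (\big[Order.max/0]_(j <- s) f j)) => h.
  by rewrite !max_r // le_dae_profile.
by rewrite !max_l ?le_dae_profile // ltW.
Qed.

Lemma rhoF_d_ae (G X : Type) (act : G -> X -> X) (d : X -> X -> R) (s : seq G) :
  (forall x y, 0 <= d x y) -> forall x y,
  rhoF act (d_ae d alpha eps) s x y = phi (rhoF act d s x y).
Proof. by move=> d0 x y; rewrite /rhoF -bigmax_dae_profile. Qed.

End dae_profile.

Section diameter.
Context {R : realType} {X : Type} (r : X -> X -> R).
Local Open Scope ereal_scope.

Lemma diam_ge0 E : 0 <= diam r E.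
Proof. by apply: ereal_sup_ubound; right. Qed.

Lemma diam_ub {E x y} : E x -> E y -> (r x y)%:E <= diam r E.
Proof. by move=> Ex Ey; apply: ereal_sup_ubound; left; exists x => //; exists y. Qed.

Lemma diam_le E (M : R) : (0 <= M)%R ->
  (forall x y, E x -> E y -> (r x y <= M)%R) -> diam r E <= M%:E.
Proof.
move=> M0 rM; apply: ge_ereal_sup => _ [[x Ex [y Ey <-]]|->].
  by rewrite lee_fin rM.
by rewrite lee_fin.
Qed.

Lemma diam_lt_fin E (z : R) : diam r E < z%:E ->
  [/\ diam r E = (fine (diam r E))%:E, (0 <= fine (diam r E))%R &
      (fine (diam r E) < z)%R].
Proof.
move=> Ez; have E0 := diam_ge0 E.
have Efin : diam r E \is a fin_num by rewrite ge0_fin_numE // (lt_trans Ez) ?ltey.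
by rewrite fine_ge0 // -lte_fin fineK.
Qed.

Lemma Hmeas_le s (a b : R) : (a <= b)%R -> Hmeas r s b <= Hmeas r s a.
Proof.
move=> ab; apply: ereal_inf_le_tmp => _ [J [E [cov Esmall ->]]].
exists J, E; split => // i Ji.
by apply: lt_le_trans (Esmall i Ji) _; rewrite lee_fin.
Qed.

Lemma dimH_le (a b : R) : (a <= b)%R -> dimH r b <= dimH r a.
Proof.
move=> ab; apply: ereal_sup_le => _ [s [s0 Hs] <-]; exists s => //; split => //.
by apply: le_trans Hs _; apply: Hmeas_le.
Qed.

End diameter.

Arguments diam_lt_fin {R X r E z}.

(* [ln delta / ln eta] for [eta = eps^(1-alpha) * delta^alpha] *)
Definition log_scale_ratio {R : realType} (alpha eps delta : R) : R :=
  ln delta / (alpha * ln delta + ln (eps `^ (1 - alpha))).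

Section log_scale_ratio.
Context {R : realType} {alpha eps : R}.
Hypotheses (alpha_gt0 : 0 < alpha) (alpha_lt1 : alpha < 1).
Hypotheses (eps_gt0 : 0 < eps) (eps_lt1 : eps < 1).
Local Notation c := (eps `^ (1 - alpha)).
Local Notation r := (log_scale_ratio alpha eps).

Lemma powR_eps_le1 : c <= 1.
Proof. by rewrite powR_le1 ?eps_gt0 ?(ltW eps_lt1) // subr_ge0 ltW. Qed.

Lemma ln_powR_eps_le0 : ln c <= 0.
Proof. by rewrite ln_le0 // powR_eps_le1. Qed.

Lemma ln_lt0_scale {delta : R} : 0 < delta -> delta <= eps -> ln delta < 0.
Proof. by move=> d0 de; rewrite ln_lt0 // d0 (le_lt_trans de eps_lt1). Qed.

Lemma log_scale_denom_lt0 {delta : R} : 0 < delta -> delta <= eps ->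
  alpha * ln delta + ln c < 0.
Proof.
move=> d0 de; rewrite -(addr0 0) ltr_leD ?ln_powR_eps_le0 //.
by rewrite pmulr_rlt0 // ln_lt0_scale.
Qed.

Lemma log_scale_ratio_gt0 {delta} : 0 < delta -> delta <= eps -> 0 < r delta.
Proof.
move=> d0 de; rewrite /log_scale_ratio -mulrNN -invrN divr_gt0 // oppr_gt0.
  exact: ln_lt0_scale.
exact: log_scale_denom_lt0.
Qed.

Lemma invr_log_scale_ratio {delta} : 0 < delta -> delta <= eps ->
  (r delta)^-1 = alpha + ln c / ln delta.
Proof.
move=> d0 de; have := ln_lt0_scale d0 de; have := log_scale_denom_lt0 d0 de.
by rewrite /log_scale_ratio invf_div => /lt_eqF q0 /lt_eqF l0; field; rewrite l0.
Qed.

Lemma alpha_le_invr_log_scale_ratio {delta} : 0 < delta -> delta <= eps ->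
  alpha <= (r delta)^-1.
Proof.
move=> d0 de; rewrite invr_log_scale_ratio // lerDl -mulrNN -invrN divr_ge0 //.
  by rewrite oppr_ge0 ln_powR_eps_le0.
by rewrite oppr_ge0 ltW // ln_lt0_scale.
Qed.

Lemma invr_log_scale_ratio_small {delta k : R} : 0 < delta -> 0 < k ->
  exists2 d, 0 < d <= Order.min delta eps & (r d)^-1 <= alpha + k.
Proof.
move=> d0 k0; set d := Order.min (Order.min delta eps) (expR (ln c / k)).
have dpos : 0 < d by rewrite !lt_min d0 eps_gt0 expR_gt0.
have de : d <= eps by rewrite !ge_min lexx orbT.
exists d; first by rewrite dpos ge_min lexx.
have ld := ln_lt0_scale dpos de.
rewrite invr_log_scale_ratio // lerD2l ler_ndivrMr // mulrC -ler_pdivlMr //.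
by rewrite -[leRHS]expRK ler_ln ?posrE ?expR_gt0 // ge_min lexx orbT.
Qed.

End log_scale_ratio.

Section scale_comparison.
Variables (R : realType) (X : Type) (rho rho' : X -> X -> R)
  (alpha eps delta : R).
Hypothesis rho_ge0 : forall x y, 0 <= rho x y.
Hypothesis rho'E : forall x y, rho' x y = dae_profile alpha eps (rho x y).
Hypotheses (alpha_gt0 : 0 < alpha) (alpha_lt1 : alpha < 1).
Hypotheses (eps_gt0 : 0 < eps) (eps_lt1 : eps < 1).
Hypotheses (delta_gt0 : 0 < delta) (delta_le_eps : delta <= eps).

Let c := eps `^ (1 - alpha).
Let eta := c * delta `^ alpha.
Let r := log_scale_ratio alpha eps delta.

Let c_gt0 : 0 < c. Proof. exact: powR_gt0. Qed.

Lemma scale_profile_le_eps : eta <= eps.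
Proof.
rewrite /eta -[leRHS](mulr_powR_subrK alpha eps_gt0).
by rewrite ler_wpM2l ?powR_ge0 // ler_powR2r // ltW.
Qed.

Lemma le_powR_log_scale_ratio D : 0 <= D -> D < delta -> D <= (c * D `^ alpha) `^ r.
Proof.
move=> D0 Dd; have [->|Dn0] := eqVneq D 0; first exact: powR_ge0.
have Dpos : 0 < D by rewrite lt_neqAle eq_sym Dn0.
have cDpos : 0 < c * D `^ alpha by rewrite mulr_gt0 ?powR_gt0.
rewrite -ler_ln ?posrE ?powR_gt0 // !ln_powR lnM ?posrE ?powR_gt0 // ln_powR.
have la : ln delta < 0 := ln_lt0_scale eps_lt1 delta_gt0 delta_le_eps.
have lb : ln c <= 0 by exact: ln_powR_eps_le0.
have lL : ln D < ln delta by rewrite ltr_ln ?posrE.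
have q0 : alpha * ln delta + ln c < 0 :=
  log_scale_denom_lt0 alpha_gt0 alpha_lt1 eps_gt0 eps_lt1 delta_gt0 delta_le_eps.
rewrite /r /log_scale_ratio -/c -subr_ge0.
set a := ln delta in la lL q0 *; set b := ln c in lb q0 *; set L := ln D in lL *.
have -> : a / (alpha * a + b) * (b + alpha * L) - L =
          (- b) * (a - L) / (- (alpha * a + b)).
  by field; rewrite lt_eqF.
by rewrite divr_ge0 ?mulr_ge0 ?oppr_ge0 ?subr_ge0 ?(ltW lL) ?(ltW q0).
Qed.

Lemma powR_le_profile D D' s : 0 <= D -> 0 <= D' -> D' <= c * D `^ alpha ->
  0 <= s -> D' `^ s <= D `^ (alpha * s).
Proof.
move=> D0 D'0 D'D s0.
apply: le_trans (ler_powR2r s0 D'0 D'D) _.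
rewrite powRM ?powR_ge0 ?(ltW c_gt0) // -powRrM ler_piMl ?powR_ge0 //.
by rewrite powR_le1 // c_gt0 powR_eps_le1.
Qed.

Lemma powR_ge_profile D D' t : 0 <= D -> D < delta -> c * D `^ alpha <= D' ->
  0 <= t -> D `^ t <= D' `^ (r * t).
Proof.
move=> D0 Dd DD' t0.
have cD0 : 0 <= c * D `^ alpha by rewrite mulr_ge0 ?powR_ge0 ?ltW.
have r0 : 0 <= r by rewrite ltW // log_scale_ratio_gt0.
apply: le_trans (ler_powR2r (mulr_ge0 r0 t0) cD0 DD').
by rewrite powRrM ler_powR2r // le_powR_log_scale_ratio.
Qed.

Local Open Scope ereal_scope.

Lemma diam_profile_small {E} : diam rho E < delta%:E ->
  diam rho' E < eta%:E /\
  (fine (diam rho' E) <= c * fine (diam rho E) `^ alpha)%R.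
Proof.
move=> /diam_lt_fin [DE D0 Dd]; set D := fine (diam rho E) in DE D0 Dd *.
have rho'D : diam rho' E <= (c * D `^ alpha)%:E.
  apply: diam_le; first by rewrite mulr_ge0 ?powR_ge0 // ltW.
  move=> x y Ex Ey; have := diam_ub rho Ex Ey; rewrite DE lee_fin => rhoD.
  rewrite rho'E /dae_profile ifF
    ?ler_wpM2l ?ler_powR2r ?(ltW c_gt0) ?(ltW alpha_gt0) //.
  by apply/negbTE; rewrite -ltNge (le_lt_trans rhoD) // (lt_le_trans Dd).
have rho'eta : diam rho' E < eta%:E.
  by apply: le_lt_trans rho'D _; rewrite lte_fin ltr_pM2l ?ltr_powR2r.
split=> //; have [D'E _ _] := diam_lt_fin rho'eta.
by rewrite -lee_fin -D'E.
Qed.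

Lemma diam_profile_small_inv {E} : diam rho' E < eta%:E ->
  diam rho E < delta%:E /\
  (c * fine (diam rho E) `^ alpha <= fine (diam rho' E))%R.
Proof.
move=> /diam_lt_fin [D'E D'0 D'eta]; set D' := fine (diam rho' E) in D'E D'0 D'eta *.
set u := ((D' / c) `^ alpha^-1)%R.
have u0 : (0 <= u)%R by exact: powR_ge0.
have uD' : (c * u `^ alpha = D')%R.
  by rewrite powRVK ?gt_eqF ?divr_ge0 ?(ltW c_gt0) // mulrC divfK ?gt_eqF.
have udelta : (u < delta)%R.
  rewrite -(powRK (lt0r_neq0 alpha_gt0) (ltW delta_gt0)) ltr_powR2r ?invr_gt0 //.
    by rewrite divr_ge0 // ltW.
  by rewrite ltr_pdivrMr // mulrC.
have rhou : diam rho E <= u%:E.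
  apply: diam_le => // x y Ex Ey; have := diam_ub rho' Ex Ey.
  rewrite D'E lee_fin rho'E /dae_profile; case: ifPn => [epsrho rhoD'|_].
    have := lt_le_trans (le_lt_trans rhoD' D'eta) scale_profile_le_eps.
    by rewrite ltNge epsrho.
  rewrite -uD' ler_pM2l // => rhou.
  have alpha_neq0 := lt0r_neq0 alpha_gt0.
  rewrite -(powRK alpha_neq0 (rho_ge0 x y)) -(powRK alpha_neq0 u0).
  by rewrite ler_powR2r ?invr_ge0 ?powR_ge0 ?(ltW alpha_gt0).
have rhodelta : diam rho E < delta%:E by apply: le_lt_trans rhou _; rewrite lte_fin.
split=> //; have [DE D0 _] := diam_lt_fin rhodelta.
by rewrite -uD' ler_wpM2l ?(ltW c_gt0) ?ler_powR2r ?(ltW alpha_gt0) // -lee_fin -DE.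
Qed.

Lemma Hmeas_profile_ge1 s : (0 <= s)%R ->
  1 <= Hmeas rho' s eta -> 1 <= Hmeas rho (alpha * s) delta.
Proof.
move=> s0 H1; apply: le_ereal_inf_tmp => _ [J [E [cov Esmall ->]]].
apply: (le_trans H1).
apply: (@le_trans _ _ (\esum_(i in J) (fine (diam rho' (E i)) `^ s)%:E)).
  apply: ereal_inf_lbound; exists J, E; split=> // i Ji.
  exact: proj1 (diam_profile_small (Esmall i Ji)).
apply: le_esum => i Ji; rewrite lee_fin.
have [_ D0 _] := diam_lt_fin (Esmall i Ji).
apply: powR_le_profile => //; first by rewrite fine_ge0 // diam_ge0.
exact: proj2 (diam_profile_small (Esmall i Ji)).
Qed.

Lemma Hmeas_ge1_profile t : (0 <= t)%R ->
  1 <= Hmeas rho t delta -> 1 <= Hmeas rho' (r * t) eta.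
Proof.
move=> t0 H1; apply: le_ereal_inf_tmp => _ [J [E [cov Esmall ->]]].
apply: (le_trans H1).
apply: (@le_trans _ _ (\esum_(i in J) (fine (diam rho (E i)) `^ t)%:E)).
  apply: ereal_inf_lbound; exists J, E; split=> // i Ji.
  exact: proj1 (diam_profile_small_inv (Esmall i Ji)).
apply: le_esum => i Ji; rewrite lee_fin.
have [Edelta EE'] := diam_profile_small_inv (Esmall i Ji).
have [_ D0 Dd] := diam_lt_fin Edelta.
exact: powR_ge_profile.
Qed.

Lemma dimH_profile_le : dimH rho' eta <= dimH rho delta * (alpha^-1)%:E.
Proof.
apply: ge_ereal_sup => _ [s [s0 Hs] <-].
rewrite lee_pdivlMr // -EFinM; apply: ereal_sup_ubound.
exists (alpha * s)%R; last by rewrite mulrC.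
by split; [rewrite mulr_ge0 // ltW | exact: Hmeas_profile_ge1].
Qed.

Lemma dimH_le_profile : dimH rho delta <= dimH rho' eta * (r^-1)%:E.
Proof.
have r0 : (0 < r)%R by exact: log_scale_ratio_gt0.
apply: ge_ereal_sup => _ [t [t0 Ht] <-].
rewrite lee_pdivlMr // -EFinM; apply: ereal_sup_ubound.
exists (r * t)%R; last by rewrite mulrC.
by split; [rewrite mulr_ge0 // ltW | exact: Hmeas_ge1_profile].
Qed.

End scale_comparison.

Local Open Scope ereal_scope.

Lemma le_limn_esup {R : realType} (u v : (\bar R)^nat) :
  (forall n, u n <= v n) -> limn_esup u <= limn_esup v.
Proof.
move=> uv; rewrite /limn_esup !limf_esupE.
apply: le_ereal_inf_tmp => _ [V HV <-].
apply: (@le_trans _ _ (ereal_sup (u @` V))); first by apply: ereal_inf_lbound; exists V.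
apply: ge_ereal_sup => _ [n Vn <-]; apply: le_trans (uv n) _.
by apply: ereal_sup_ubound; exists n.
Qed.

Lemma limn_esupZr {R : realType} (u : (\bar R)^nat) (k : R) : (0 < k)%R ->
  limn_esup (fun n => u n * k%:E) = limn_esup u * k%:E.
Proof.
move=> k0; rewrite /limn_esup !limf_esupE muleC -ereal_inf_pZl //.
have supZ V : ereal_sup ((fun n => u n * k%:E) @` V) = k%:E * ereal_sup (u @` V).
  rewrite -ereal_sup_pZl // image_comp; congr ereal_sup.
  by apply: eq_imagel => n _ /=; rewrite muleC.
congr ereal_inf; apply/seteqP; split.
- by move=> _ /= [V HV <-]; exists (ereal_sup (u @` V)); [exists V | rewrite supZ].
- by move=> _ /= [_ [V HV <-] <-]; exists V; rewrite ?supZ.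
Qed.

Definition esup_pos {R : realType} (f : R -> \bar R) : \bar R :=
  ereal_sup (f @` [set` `]0%R, +oo[]).

Definition mdimH_scale {R : realType} {G X : Type} (act : G -> X -> X)
  (F : nat -> seq G) (rho : X -> X -> R) (del : R) : \bar R :=
  limn_esup (fun n => dimH (rhoF act rho (F n)) del * ((size (F n))%:R^-1)%:E).

Section mdimH_scale.
Context {R : realType} {G X : Type} (act : G -> X -> X) (F : nat -> seq G).

Lemma mdimH_scale_le (rho : X -> X -> R) (a b : R) : (a <= b)%R ->
  mdimH_scale act F rho b <= mdimH_scale act F rho a.
Proof.
move=> ab; apply: le_limn_esup => n.
by rewrite lee_wpmul2r ?lee_fin ?invr_ge0 // dimH_le.
Qed.

Lemma mdimH_supE (rho : X -> X -> R) :
  mdimH act F rho = esup_pos (mdimH_scale act F rho).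
Proof.
rewrite /mdimH; apply: cvg_lim; first by [].
apply: nonincreasing_at_right_cvge; first by [].
by move=> x y _ _; apply: mdimH_scale_le.
Qed.

Variables (d : X -> X -> R) (alpha eps : R).
Hypothesis d_ge0 : forall x y, (0 <= d x y)%R.
Hypotheses (alpha_gt0 : (0 < alpha)%R) (alpha_lt1 : (alpha < 1)%R).
Hypotheses (eps_gt0 : (0 < eps)%R) (eps_lt1 : (eps < 1)%R).
Let c := (eps `^ (1 - alpha))%R.

Lemma mdimH_scale_d_ae_le del : (0 < del)%R -> (del <= eps)%R ->
  mdimH_scale act F (d_ae d alpha eps) (c * del `^ alpha) <=
  mdimH_scale act F d del * (alpha^-1)%:E.
Proof.
move=> del0 dele; rewrite /mdimH_scale -limn_esupZr ?invr_gt0 //.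
apply: le_limn_esup => n; rewrite muleAC lee_wpmul2r ?lee_fin ?invr_ge0 //.
apply: dimH_profile_le => // x y; first exact: bigmax_ge_id.
exact: rhoF_d_ae.
Qed.

Lemma mdimH_scale_le_d_ae del : (0 < del)%R -> (del <= eps)%R ->
  mdimH_scale act F d del <=
  mdimH_scale act F (d_ae d alpha eps) (c * del `^ alpha) *
    ((log_scale_ratio alpha eps del)^-1)%:E.
Proof.
move=> del0 dele; rewrite /mdimH_scale -limn_esupZr ?invr_gt0 ?log_scale_ratio_gt0 //.
apply: le_limn_esup => n; rewrite muleAC lee_wpmul2r ?lee_fin ?invr_ge0 //.
apply: dimH_le_profile => // x y; first exact: bigmax_ge_id.
exact: rhoF_d_ae.
Qed.

End mdimH_scale.

Section esup_pos_rescale.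
Context {R : realType}.
Variables (alpha eps : R).
Hypotheses (alpha_gt0 : (0 < alpha)%R) (alpha_lt1 : (alpha < 1)%R).
Hypotheses (eps_gt0 : (0 < eps)%R) (eps_lt1 : (eps < 1)%R).
Let c := (eps `^ (1 - alpha))%R.
Local Notation r := (log_scale_ratio alpha eps).

Lemma le_mul_alpha_of_log_scale_ratio {x y : \bar R} {delta : R} : (0 < delta)%R ->
  (forall d, (0 < d)%R -> (d <= Order.min delta eps)%R -> x <= y * ((r d)^-1)%:E) ->
  x <= y * alpha%:E.
Proof.
move=> delta0 xy; have m0 : (0 < Order.min delta eps)%R by rewrite lt_min delta0.
have m_eps : (Order.min delta eps <= eps)%R by rewrite ge_min lexx orbT.
have r0 := log_scale_ratio_gt0 alpha_gt0 alpha_lt1 eps_gt0 eps_lt1 m0 m_eps.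
case: y xy => [m| |] xy; last 2 first.
- by rewrite gt0_mulye ?lte_fin // leey.
- move: (xy _ m0 (lexx _)).
  by rewrite !gt0_mulNye ?lte_fin ?invr_gt0 // leeNy_eq => /eqP ->.
have [m_le0|m_gt0] := leP m 0%R.
  apply: le_trans (xy _ m0 (lexx _)) _; rewrite -!EFinM lee_fin ler_wnM2l //.
  exact: alpha_le_invr_log_scale_ratio.
(* [1/r d -> alpha] as [d -> 0] *)
apply/lee_addgt0Pr => e e0.
have [d /andP[d0 d_min] rd] := invr_log_scale_ratio_small
  alpha_gt0 alpha_lt1 eps_gt0 eps_lt1 delta0 (divr_gt0 e0 m_gt0).
apply: le_trans (xy _ d0 d_min) _; rewrite -EFinM -EFinD lee_fin.
apply: le_trans (ler_wpM2l (ltW m_gt0) rd) _.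
by rewrite mulrDr mulrCA divff ?gt_eqF ?mulr1.
Qed.

Variables A B : R -> \bar R.
Hypothesis A_nonincr : forall x y, (0 < x)%R -> (x <= y)%R -> A y <= A x.
Hypothesis B_nonincr : forall x y, (0 < x)%R -> (x <= y)%R -> B y <= B x.
Hypothesis B_le_A : forall del, (0 < del)%R -> (del <= eps)%R ->
  B (c * del `^ alpha)%R <= A del * (alpha^-1)%:E.
Hypothesis A_le_B : forall del, (0 < del)%R -> (del <= eps)%R ->
  A del <= B (c * del `^ alpha)%R * ((r del)^-1)%:E.

Let c_gt0 : (0 < c)%R. Proof. exact: powR_gt0. Qed.

Let scale_gt0 {del} : (0 < del)%R -> (0 < c * del `^ alpha)%R.
Proof. by move=> del0; rewrite mulr_gt0 ?powR_gt0. Qed.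

Lemma esup_pos_B_le : esup_pos B <= esup_pos A * (alpha^-1)%:E.
Proof.
rewrite /esup_pos.
apply: ge_ereal_sup => _ [eta +] <-; rewrite /= in_itv /= andbT => eta0.
set del := Order.min eps ((eta / c) `^ alpha^-1)%R.
have del0 : (0 < del)%R by rewrite lt_min eps_gt0 powR_gt0 // divr_gt0.
have del_eps : (del <= eps)%R by rewrite ge_min lexx.
have del_eta : (c * del `^ alpha <= eta)%R.
  rewrite mulrC -ler_pdivlMr //.
  rewrite -(powRVK (lt0r_neq0 alpha_gt0) (ltW (divr_gt0 eta0 c_gt0))).
  by rewrite ler_powR2r ?ge_min ?lexx ?orbT ?(ltW alpha_gt0) ?(ltW del0).
apply: le_trans (B_nonincr _ _ (scale_gt0 del0) del_eta) _.
apply: le_trans (B_le_A del del0 del_eps) _.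
rewrite lee_wpmul2r ?lee_fin ?invr_ge0 ?(ltW alpha_gt0) //.
by apply: ereal_sup_ubound; exists del; rewrite //= in_itv /= andbT.
Qed.

Lemma esup_pos_A_le : esup_pos A * (alpha^-1)%:E <= esup_pos B.
Proof.
rewrite /esup_pos muleC -ereal_sup_pZl ?invr_gt0 //.
apply: ge_ereal_sup => _ [_ [del + <-] <-]; rewrite /= in_itv /= andbT => del0.
rewrite muleC lee_pdivrMr //.
apply: (le_mul_alpha_of_log_scale_ratio del0) => d d0.
rewrite le_min => /andP[d_del d_eps].
apply: le_trans (A_nonincr _ _ d0 d_del) _; apply: le_trans (A_le_B d d0 d_eps) _.
rewrite lee_wpmul2r ?lee_fin ?invr_ge0 ?(ltW (log_scale_ratio_gt0 _ _ _ _ d0 d_eps)) //.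
apply: ereal_sup_ubound; exists (c * d `^ alpha)%R => //.
by rewrite /= in_itv /= andbT scale_gt0.
Qed.

Lemma esup_pos_rescale : esup_pos B = esup_pos A * (alpha^-1)%:E.
Proof. by apply/eqP; rewrite eq_le esup_pos_B_le esup_pos_A_le. Qed.

End esup_pos_rescale.

Local Close Scope ereal_scope.

Theorem mainTheorem11 (R : realType) (G : countType)
  (mul : G -> G -> G) (one : G) (inv : G -> G)
  (HG : group_laws mul one inv)
  (X : Type) (d : X -> X -> R) (act : G -> X -> X)
  (Hsys : G_system mul one d act)
  (F : nat -> seq G) (HF : Folner (R:=R) mul F)
  (alpha eps : R) (Ha : 0 < alpha < 1) (He : 0 < eps < 1) :
  mdimH act F (d_ae d alpha eps) = (mdimH act F d * (alpha^-1)%:E)%E.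
Proof.
move: Ha He => /andP[alpha_gt0 alpha_lt1] /andP[eps_gt0 eps_lt1].
have d_ge0 : forall x y, 0 <= d x y by case: Hsys => [[[]]].
rewrite !mdimH_supE.
apply: (@esup_pos_rescale R alpha eps alpha_gt0 alpha_lt1 eps_gt0 eps_lt1).
- by move=> x y _; apply: mdimH_scale_le.
- by move=> x y _; apply: mdimH_scale_le.
- by move=> del; apply: mdimH_scale_d_ae_le.
- by move=> del; apply: mdimH_scale_le_d_ae.
Qed.
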